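(* Let $p\geq 5$ and $p'=p+2$ both be prime, and put $a=\frac{p+1}{6}$. Then for every integer $n\geq 0$ the numbers $pp'(2n+1)\pm 4a$ are positive, and $$p[p'(2n+1)+4a]+4a=p'[p(2n+1)+4a]-4\tfrac{p'-1}{6}>0,$$ $$p[p'(2n+1)-4a]-4a=p'[p(2n+1)-4a]+4\tfrac{p'-1}{6}>0.$$ All these numbers are common non-ranks of $p$ and $p'$: each of them is a non-rank and can be written both as $kp\pm 4N(p/6)$ and as $k'p'\pm 4N(p'/6)$ with $k,k'$ positive odd integers.
   Context: $N(x)$ denotes the integer nearest to the real number $x$. An odd integer $t\geq 3$ is a twin-4 rank if $3t-2$ and $3t+2$ are both prime, and a non-rank otherwise. *)

From mathcomp Require Import all_boot all_order all_algebra.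
Set Implicit Arguments. Unset Strict Implicit. Unset Printing Implicit Defensive.
Import Order.TTheory GRing.Theory Num.Theory.
Local Open Scope ring_scope.

(* N(x): the integer nearest to the rational x, computed as floor(x + 1/2)
   (ties, which never occur in this file's uses, are rounded up). *)
Definition nearest (x : rat) : int := Num.floor (x + 1 / 2).

Definition twin4_rank (t : int) : Prop :=
  [/\ odd (absz t), (3 <= t) & prime (absz (3 * t - 2)%R) /\ prime (absz (3 * t + 2)%R)].

Definition non_rank (t : int) : Prop :=
  [/\ odd (absz t), (3 <= t) & ~ (prime (absz (3 * t - 2)%R) /\ prime (absz (3 * t + 2)%R))].

Definition repr_for (q : nat) (t : int) : Prop :=
  exists k : nat, [/\ (0 < k)%N, odd k &
    (t = k%:Z * q%:Z + 4 * nearest (q%:Q / 6) \/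
     t = k%:Z * q%:Z - 4 * nearest (q%:Q / 6))].

Definition common_non_rank (q q' : nat) (t : int) : Prop :=
  [/\ non_rank t, repr_for q t & repr_for q' t].

From mathcomp Require Import all_boot all_order all_algebra.
From mathcomp Require Import zify lra.
Import Order.TTheory GRing.Theory Num.Theory.
Local Open Scope ring_scope.

(* Writing p = 6c + 5 (forced by p, p + 2 prime), both N(p/6) and N((p+2)/6)
   equal a = c + 1, and 12a = 2p + 2.  Hence for t = kp +- 4a one gets
   3t - 2 = p(3k + 2) in the + case and 3t + 2 = p(3k - 2) in the - case, so t
   is never a twin-4 rank as soon as t > p.  The four numbers of the theorem
   are of this shape for p and, by the displayed identities, also for p + 2. *)

Lemma twin_prime_mod6 (p : nat) :
  (5 <= p)%N -> prime p -> prime (p + 2) -> (p %% 6 = 5)%N.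
Proof.
move=> p_ge5 p_pr p2_pr.
have p_odd : odd p by case: (even_prime p_pr) => // p2; rewrite p2 in p_ge5.
have p_mod3 : (p %% 3 = 2)%N.
  have p_ndvd3 : ~~ (3 %| p)%N by rewrite dvdn_prime2 //; lia.
  have p2_ndvd3 : ~~ (3 %| p + 2)%N by rewrite dvdn_prime2 //; lia.
  by move: p_ndvd3 p2_ndvd3; rewrite /dvdn -modnDm; lia.
lia.
Qed.

Lemma nearest_sixth (c r : nat) :
  (3 <= r < 9)%N -> nearest ((6 * c + r)%N%:Q / 6) = (c + 1)%N%:Z.
Proof.
move=> /andP[r_ge3 r_lt9]; rewrite /nearest; apply/eqP; rewrite floor_eq.
have : 3 <= r%:Q < 9 by rewrite !ler_nat !ltr_nat r_ge3 r_lt9.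
by rewrite -!pmulrn !natrD => /andP[? ?]; apply/andP; split; lra.
Qed.

Lemma not_prime_absz_mul (x y : int) : 1 < x -> 1 < y -> ~ prime (absz (x * y)).
Proof.
move=> x_gt1 y_gt1; apply/negP/primePn; right; exists (absz x); last first.
  by rewrite abszM dvdn_mulr.
by rewrite abszM; apply/andP; split; nia.
Qed.

Lemma non_rank_of_repr (c : nat) (t : int) :
  repr_for (6 * c + 5) t -> (6 * c + 5)%N%:Z < t -> non_rank t.
Proof.
rewrite /repr_for nearest_sixth //.
move=> [k [_ k_odd t_eq]] p_lt_t.
have t_odd : odd (absz t) by case: t_eq => ->; nia.
split => //; first lia.
case: t_eq => t_eq [pr_minus pr_plus].
- have factor : 3 * t - 2 = (6 * c + 5)%N%:Z * (3 * k%:Z + 2) by rewrite t_eq; lia.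
  by move: pr_minus; rewrite factor; apply: not_prime_absz_mul; lia.
- have k_ge3 : (3 <= k)%N by lia.
  have factor : 3 * t + 2 = (6 * c + 5)%N%:Z * (3 * k%:Z - 2) by rewrite t_eq; lia.
  by move: pr_plus; rewrite factor; apply: not_prime_absz_mul; lia.
Qed.

Lemma common_non_rank_twin (c k k' : nat) (t : int) :
  odd k -> odd k' -> (6 * c + 5)%N%:Z < t ->
  t = k%:Z * (6 * c + 5)%N%:Z + 4 * (c + 1)%N%:Z \/
  t = k%:Z * (6 * c + 5)%N%:Z - 4 * (c + 1)%N%:Z ->
  t = k'%:Z * (6 * c + 7)%N%:Z + 4 * (c + 1)%N%:Z \/
  t = k'%:Z * (6 * c + 7)%N%:Z - 4 * (c + 1)%N%:Z ->
  common_non_rank (6 * c + 5) (6 * c + 5 + 2) t.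
Proof.
move=> k_odd k'_odd p_lt_t t_eq t_eq'.
have repr_p : repr_for (6 * c + 5) t.
  by exists k; rewrite nearest_sixth //; split => //; rewrite odd_gt0.
split; first exact: non_rank_of_repr repr_p p_lt_t.
- exact: repr_p.
- by exists k'; rewrite -addnA nearest_sixth //; split => //; rewrite odd_gt0.
Qed.

Theorem theorem3p8 (p : nat) :
  (5 <= p)%N -> prime p -> prime (p + 2) ->
  forall n : nat,
    let P : int := p%:Z in
    let P' : int := (p + 2)%:Z in
    let a : int := ((p + 1) %/ 6)%:Z in
    let b : int := ((p + 2 - 1) %/ 6)%:Z in
    let m : int := (2 * n + 1)%:Z in
    [/\ 0 < P * P' * m + 4 * a,
        0 < P * P' * m - 4 * a,
        P * (P' * m + 4 * a) + 4 * a = P' * (P * m + 4 * a) - 4 * b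
          /\ 0 < P * (P' * m + 4 * a) + 4 * a,
        P * (P' * m - 4 * a) - 4 * a = P' * (P * m - 4 * a) + 4 * b
          /\ 0 < P * (P' * m - 4 * a) - 4 * a &
        forall t, t \in [:: P * P' * m + 4 * a; P * P' * m - 4 * a;
                          P * (P' * m + 4 * a) + 4 * a;
                          P * (P' * m - 4 * a) - 4 * a] ->
                  common_non_rank p (p + 2) t].
Proof.
move=> p_ge5 p_pr p2_pr n.
have [c ->] : exists c, p = (6 * c + 5)%N.
  by exists (p %/ 6)%N; move: (divn_eq p 6); rewrite twin_prime_mod6 //; lia.
have -> : ((6 * c + 5 + 1) %/ 6 = c + 1)%N by lia.
have -> : ((6 * c + 5 + 2 - 1) %/ 6 = c + 1)%N by lia.
move=> P P' a b m; rewrite {}/P {}/P' {}/a {}/b {}/m.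
split; [nia | nia | split; nia | split; nia |].
move=> t; rewrite !inE => /or4P [] /eqP ->.
- by apply: (@common_non_rank_twin c ((6 * c + 7) * (2 * n + 1))
                                    ((6 * c + 5) * (2 * n + 1))); nia.
- by apply: (@common_non_rank_twin c ((6 * c + 7) * (2 * n + 1))
                                    ((6 * c + 5) * (2 * n + 1))); nia.
- by apply: (@common_non_rank_twin c ((6 * c + 7) * (2 * n + 1) + 4 * (c + 1))
                                    ((6 * c + 5) * (2 * n + 1) + 4 * (c + 1))); nia.
- by apply: (@common_non_rank_twin c ((6 * c + 7) * (2 * n + 1) - 4 * (c + 1))
                                    ((6 * c + 5) * (2 * n + 1) - 4 * (c + 1))); nia.
Qed.
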